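(* Let $\theta>0$, $\zeta>0$, $P>0$, $\beta=\lfloor1/\theta\rfloor$, $\alpha=1/\theta-\beta$, and $g_\ell=\zeta P\,\mathrm{sinc}(\ell/\theta)$ for $\ell\in\mathbb{Z}$. Define the interference power $$I=\frac{1}{\zeta P}\sum_{\ell\in\mathbb{Z},\,\ell\neq0}|g_\ell|^2 .$$ Then $$I=\zeta P\Big(\theta^2\big(\beta^2+2\alpha\beta+\alpha\big)-1\Big),$$ and consequently the matched-filter per-terminal capacity $\log\!\big(1+\zeta P/(N_0+I)\big)$ equals $\log\!\Big(1+\frac{\zeta P}{N_0+\zeta P(\theta^2(\beta^2+2\alpha\beta+\alpha)-1)}\Big)$. In particular $I=0$ whenever $1/\theta$ is an integer.
   Context: $\mathrm{sinc}(x)=\sin(\pi x)/(\pi x)$ with $\mathrm{sinc}(0)=1$; $\log$ is natural. $g_\ell$ is the (approximate) effective channel between terminals $\ell$ positions apart on a line with spacing $\Delta_x$ in front of a large surface, with $\theta=\lambda/(2\Delta_x)$, $\lambda$ the wavelength, $P$ the per-terminal transmit power, $N_0$ the noise power spectral density. *)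

From Stdlib Require Import Reals Lra ZArith.
Open Scope R_scope.

Definition sinc (x : R) : R :=
  if Req_EM_T x 0 then 1 else sin (PI * x) / (PI * x).

(* floor of a real: Int_part r = up r - 1 is the floor *)
Definition floorR (x : R) : R := IZR (Int_part x).

Definition gch (zeta P theta : R) (l : Z) : R :=
  zeta * P * sinc (IZR l / theta).

(* The series over l in Z \ {0}, enumerated as n = 1,2,... pairing l = n and l = -n:
   term n collects |g_(n+1)|^2 + |g_(-(n+1))|^2, divided by zeta P. *)
Definition interf_term (zeta P theta : R) (n : nat) : R :=
  ((Rabs (gch zeta P theta (Z.of_nat (S n)))) ^ 2
   + (Rabs (gch zeta P theta (- Z.of_nat (S n)))) ^ 2) / (zeta * P).

From Stdlib Require Import Reals Lra Lia ZArith.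
From Coquelicot Require Import Coquelicot.
Open Scope R_scope.

(* Since [2 sin^2 y = 1 - cos (2 y)] and [1/theta] differs from [alpha] by the integer
   [beta], the interference series is [zeta P theta^2 / PI^2] times
   [sum_(n>=1) (1 - cos (n s)) / n^2] at [s = 2 PI alpha]. This cosine series equals
   [s (2 PI - s) / 4] on [[0, 2 PI]], which gives [I = zeta P theta^2 alpha (1 - alpha)].
   The series is summed elementarily: differentiating [sum (cos (n PI) - cos (n x)) / n^2]
   twice yields the Dirichlet kernel, whose primitive is [O(1/N)] away from [PI] by an
   integration by parts, so the series converges to [-(s - PI)^2/4] on [(0, 2 PI)]; the
   remaining constant, the value at [PI], is the monotone limit squeezed between the two
   bounds [0 <= partial sums <= (K+1) s^2/2 + 2/(K+1)] as [s -> 0]. *)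

Lemma Un_cv_const (c : R) : Un_cv (fun _ => c) c.
Proof.
  intros eps Heps. exists 0%nat. intros n _.
  unfold R_dist. rewrite Rminus_diag, Rabs_R0. lra.
Qed.

Lemma Un_cv_of_Rabs_le_inv (u : nat -> R) (l K : R) :
  (forall N, Rabs (u N - l) <= K / (INR N + 1)) -> Un_cv u l.
Proof.
  intros Hu eps Heps.
  destruct (archimed (K / eps)) as [Hup _].
  exists (Z.to_nat (up (K / eps))). intros N HN. unfold R_dist.
  assert (HNpos : 0 < INR N + 1) by (pose proof (pos_INR N); lra).
  assert (HKN : K / eps < INR N + 1).
  { apply Rlt_le_trans with (IZR (up (K / eps))); [exact Hup|].
    destruct (Z_le_gt_dec 0 (up (K / eps))) as [Hz|Hz].
    - rewrite <- (Z2Nat.id _ Hz), <- INR_IZR_INZ.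
      apply le_INR in HN. lra.
    - apply Z.gt_lt, IZR_lt in Hz. pose proof (pos_INR N). lra. }
  eapply Rle_lt_trans; [apply Hu|].
  apply (Rmult_lt_reg_r (INR N + 1)); [exact HNpos|].
  unfold Rdiv. rewrite Rmult_assoc, Rinv_l, Rmult_1_r by lra.
  apply (Rmult_lt_compat_l eps) in HKN; [|lra].
  unfold Rdiv in HKN. rewrite <- Rmult_assoc, (Rmult_comm eps K), Rmult_assoc,
    Rinv_r, Rmult_1_r in HKN by lra.
  exact HKN.
Qed.

Lemma eq_of_Rabs_le_inv (x y c : R) :
  (forall K : nat, Rabs (x - y) <= c / INR (S K)) -> x = y.
Proof.
  intros H. apply (UL_sequence (fun _ => x)); [apply Un_cv_const|].
  apply (Un_cv_of_Rabs_le_inv _ _ c). intros N. rewrite <- S_INR. apply H.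
Qed.

Lemma infinite_sum_ext (a b : nat -> R) (l : R) :
  (forall n, a n = b n) -> infinite_sum a l -> infinite_sum b l.
Proof.
  intros Hab Ha eps Heps. destruct (Ha eps Heps) as [N HN].
  exists N. intros n Hn. rewrite <- (sum_eq a b n) by auto. auto.
Qed.

Lemma infinite_sum_scal (c : R) (a : nat -> R) (l : R) :
  infinite_sum a l -> infinite_sum (fun n => c * a n) (c * l).
Proof.
  intros Ha.
  assert (Hcv : Un_cv (fun N => c * sum_f_R0 a N) (c * l))
    by exact (CV_mult _ _ _ _ (Un_cv_const c) Ha).
  intros eps Heps. destruct (Hcv eps Heps) as [N HN].
  exists N. intros n Hn. rewrite (sum_eq _ (fun k => a k * c)) by (intros; ring).
  rewrite <- scal_sum. auto.
Qed.

Lemma infinite_sum_zero : infinite_sum (fun _ => 0) 0.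
Proof.
  intros eps Heps. exists 0%nat. intros n _.
  rewrite sum_cte, Rmult_0_l. unfold R_dist. rewrite Rminus_diag, Rabs_R0. lra.
Qed.

Lemma is_derive_sum_f_R0 (u du : nat -> R -> R) (N : nat) (x : R) :
  (forall k, is_derive (u k) x (du k x)) ->
  is_derive (fun y => sum_f_R0 (fun k => u k y) N) x (sum_f_R0 (fun k => du k x) N).
Proof.
  intros Hu. induction N as [|N IH]; [apply Hu|].
  exact (is_derive_plus (fun y => sum_f_R0 (fun k => u k y) N) (u (S N)) x _ _ IH (Hu (S N))).
Qed.

Lemma derive_bound_lipschitz (f df : R -> R) (lo hi B : R) :
  (forall x, lo <= x <= hi -> is_derive f x (df x)) ->
  (forall x, lo <= x <= hi -> Rabs (df x) <= B) ->
  forall y z, lo <= y <= hi -> lo <= z <= hi -> Rabs (f y - f z) <= B * Rabs (y - z).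
Proof.
  intros Hd Hb y z Hy Hz.
  assert (Hin : forall x, Rmin z y <= x <= Rmax z y -> lo <= x <= hi).
  { intros x Hx. split.
    - apply Rle_trans with (Rmin z y); [apply Rmin_glb; lra | lra].
    - apply Rle_trans with (Rmax z y); [lra | apply Rmax_lub; lra]. }
  destruct (MVT_gen f z y df) as [c [Hc ->]].
  - intros x Hx. apply Hd, Hin. lra.
  - intros x Hx. apply continuity_pt_filterlim, (ex_derive_continuous f x).
    exists (df x). apply Hd, Hin, Hx.
  - rewrite Rabs_mult. apply Rmult_le_compat_r; [apply Rabs_pos|]. apply Hb, Hin, Hc.
Qed.

Lemma Rabs_div_le_inv (a c d : R) : Rabs a <= 1 -> 0 < d <= c -> Rabs (a / c) <= / d.
Proof.
  intros Ha Hd. unfold Rdiv. rewrite Rabs_mult, Rabs_inv, (Rabs_pos_eq c) by lra.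
  apply Rle_trans with (1 * / c).
  - apply Rmult_le_compat_r; [left; apply Rinv_0_lt_compat; lra | exact Ha].
  - rewrite Rmult_1_l. apply Rinv_le_contravar; lra.
Qed.

Lemma sin_INR_PI (n : nat) : sin (INR n * PI) = 0.
Proof. apply sin_eq_0_1. exists (Z.of_nat n). now rewrite INR_IZR_INZ. Qed.

Lemma cos_period_Z (x : R) (k : Z) : cos (x + 2 * IZR k * PI) = cos x.
Proof.
  destruct (Z_le_gt_dec 0 k) as [Hk|Hk].
  - rewrite <- (Z2Nat.id k Hk), <- INR_IZR_INZ. apply cos_period.
  - rewrite <- (cos_period _ (Z.to_nat (- k))), INR_IZR_INZ, Z2Nat.id by lia.
    f_equal. rewrite opp_IZR. ring.
Qed.

Lemma dirichlet_kernel_mul (x : R) (N : nat) :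
  2 * sin (x / 2) * (/ 2 + sum_f_R0 (fun k => cos (INR (S k) * x)) N)
  = sin ((INR (S N) + / 2) * x).
Proof.
  assert (Hprod : forall y, 2 * sin (x / 2) * cos y = sin (y + x / 2) - sin (y - x / 2)).
  { intros y. rewrite sin_plus, sin_minus. ring. }
  induction N as [|N IH]; cbn [sum_f_R0].
  - rewrite Rmult_plus_distr_l, Hprod.
    replace (INR 1 * x - x / 2) with (x / 2) by (simpl; field).
    replace ((INR 1 + / 2) * x) with (INR 1 * x + x / 2) by field. field.
  - transitivity (2 * sin (x / 2) * (/ 2 + sum_f_R0 (fun k => cos (INR (S k) * x)) N)
                   + 2 * sin (x / 2) * cos (INR (S (S N)) * x)); [ring|].
    rewrite IH, Hprod.
    replace (INR (S (S N)) * x - x / 2) with ((INR (S N) + / 2) * x) by (rewrite (S_INR (S N)); field).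
    replace ((INR (S (S N)) + / 2) * x) with (INR (S (S N)) * x + x / 2) by field. ring.
Qed.

Lemma sin_sq_le_sq (u : R) : sin u ^ 2 <= u ^ 2.
Proof.
  assert (Hpos : forall v, 0 <= v -> sin v ^ 2 <= v ^ 2).
  { intros v Hv. destruct (Rle_dec v PI) as [HvPI|HvPI].
    - destruct (Req_dec v 0) as [->|Hv0]; [rewrite sin_0; lra|].
      pose proof (sin_ge_0 v Hv HvPI). pose proof (sin_lt_x v ltac:(lra)). nra.
    - pose proof (SIN_bound v). pose proof PI2_3_2. nra. }
  destruct (Rle_dec 0 u) as [Hu|Hu]; [auto|].
  replace u with (- - u) by ring. rewrite sin_neg.
  replace ((- sin (- u)) ^ 2) with (sin (- u) ^ 2) by ring.
  replace ((- - u) ^ 2) with ((- u) ^ 2) by ring. apply Hpos. lra.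
Qed.

Lemma one_minus_cos_le (y : R) : 1 - cos y <= y ^ 2 / 2.
Proof.
  replace y with (2 * (y / 2)) at 1 by field. rewrite cos_2a_sin.
  pose proof (sin_sq_le_sq (y / 2)). simpl in *. nra.
Qed.

Definition sawtooth_err (N : nat) (x : R) : R :=
  sum_f_R0 (fun k => sin (INR (S k) * x) / INR (S k)) N + (x - PI) / 2.

Definition parabola_err (N : nat) (x : R) : R :=
  sum_f_R0 (fun k => (cos (INR (S k) * PI) - cos (INR (S k) * x)) / INR (S k) ^ 2) N
  + (x - PI) ^ 2 / 4.

Lemma is_derive_parabola_err (N : nat) (x : R) :
  is_derive (parabola_err N) x (sawtooth_err N x).
Proof.
  apply (is_derive_plus (fun y => sum_f_R0 _ N) (fun y => (y - PI) ^ 2 / 4)).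
  - apply (is_derive_sum_f_R0 (fun k y => (cos (INR (S k) * PI) - cos (INR (S k) * y)) / INR (S k) ^ 2)
                              (fun k y => sin (INR (S k) * y) / INR (S k))).
    intros k. generalize (not_0_INR (S k) (Nat.neq_succ_0 k)). generalize (INR (S k)).
    intros m Hm. auto_derive; [auto|]. field. exact Hm.
  - auto_derive; [auto|]. simpl. field.
Qed.

Lemma is_derive_sawtooth_err (N : nat) (x : R) :
  sin (x / 2) <> 0 ->
  is_derive (sawtooth_err N) x (sin ((INR (S N) + / 2) * x) / (2 * sin (x / 2))).
Proof.
  intros Hx.
  replace (sin ((INR (S N) + / 2) * x) / (2 * sin (x / 2)))
    with (sum_f_R0 (fun k => cos (INR (S k) * x)) N + / 2)
    by (rewrite <- dirichlet_kernel_mul; field; exact Hx).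
  apply (is_derive_plus (fun y => sum_f_R0 _ N) (fun y => (y - PI) / 2)).
  - apply (is_derive_sum_f_R0 (fun k y => sin (INR (S k) * y) / INR (S k))
                              (fun k y => cos (INR (S k) * y))).
    intros k. generalize (not_0_INR (S k) (Nat.neq_succ_0 k)). generalize (INR (S k)).
    intros m Hm. auto_derive; [auto|]. field. exact Hm.
  - auto_derive; [auto|]. field.
Qed.

Lemma sawtooth_err_PI (N : nat) : sawtooth_err N PI = 0.
Proof.
  unfold sawtooth_err. rewrite (sum_eq _ (fun _ => 0)), sum_cte.
  - field.
  - intros k _. rewrite sin_INR_PI. unfold Rdiv. ring.
Qed.

Lemma parabola_err_PI (N : nat) : parabola_err N PI = 0.
Proof.
  unfold parabola_err. rewrite (sum_eq _ (fun _ => 0)), sum_cte.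
  - field.
  - intros k _. unfold Rdiv. rewrite Rminus_diag. ring.
Qed.

Lemma is_derive_boundary_term (m x : R) :
  m <> 0 -> sin (x / 2) <> 0 ->
  is_derive (fun y => cos (m * y) / (2 * m * sin (y / 2))) x
    (- sin (m * x) / (2 * sin (x / 2)) - cos (m * x) * cos (x / 2) / (4 * m * sin (x / 2) ^ 2)).
Proof.
  intros Hm Hx. auto_derive.
  - replace (x * / 2) with (x / 2) by field. repeat split; auto; lra.
  - replace (x * / 2) with (x / 2) by field. field. auto.
Qed.

Section DirichletBound.

Variables (s : R) (N : nat).
Hypothesis Hs : 0 < s < 2 * PI.

Let M := INR (S N) + / 2.
Let sigma := sin (s / 2).
Let lo := Rmin s PI.
Let hi := Rmax s PI.

Let M_pos : 0 < M.
Proof. unfold M. pose proof (pos_INR (S N)). lra. Qed.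

Let between_s_PI (x : R) :
  lo <= x <= hi -> Rabs (x - PI) <= PI /\ 0 < sigma <= sin (x / 2).
Proof.
  intros Hx. pose proof PI_RGT_0.
  assert (Hsig : 0 < sigma) by (apply sin_gt_0; lra).
  unfold lo, hi in Hx. destruct (Rle_dec s PI) as [HsPI|HsPI].
  - rewrite Rmin_left, Rmax_right in Hx by lra.
    split; [apply Rabs_le; lra|]. split; [exact Hsig|].
    apply sin_incr_1; lra.
  - rewrite Rmin_right, Rmax_left in Hx by lra.
    split; [apply Rabs_le; lra|]. split; [exact Hsig|].
    apply sin_decr_1; lra.
Qed.

Let s_between : lo <= s <= hi.
Proof. split; [apply Rmin_l | apply Rmax_l]. Qed.

Let PI_between : lo <= PI <= hi.
Proof. split; [apply Rmin_r | apply Rmax_r]. Qed.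

(* The boundary term of an integration by parts of the Dirichlet kernel: it cancels the
   oscillating part of the derivative of [sawtooth_err], leaving a derivative of size [O(1/M)]. *)
Let corrected (x : R) : R := sawtooth_err N x + cos (M * x) / (2 * M * sin (x / 2)).

Lemma corrected_sawtooth_bound (x : R) :
  lo <= x <= hi -> Rabs (corrected x) <= PI / (4 * M * sigma ^ 2).
Proof.
  intros Hx. pose proof PI_RGT_0.
  assert (Hcos : cos (M * PI) = 0).
  { apply cos_eq_0_1. exists (Z.of_nat (S N)). rewrite <- INR_IZR_INZ. unfold M. field. }
  assert (Hzero : corrected PI = 0).
  { unfold corrected. rewrite sawtooth_err_PI, Hcos. unfold Rdiv. ring. }
  replace (corrected x) with (corrected x - corrected PI) by (rewrite Hzero; ring).
  destruct (between_s_PI x Hx) as [HxPI [Hsig _]].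
  assert (Hden : 0 < 4 * M * sigma ^ 2)
    by (apply Rmult_lt_0_compat; [lra | apply pow_lt; lra]).
  apply Rle_trans with (/ (4 * M * sigma ^ 2) * Rabs (x - PI)).
  2: { unfold Rdiv. rewrite (Rmult_comm PI).
       apply Rmult_le_compat_l; [left; apply Rinv_0_lt_compat|]; lra. }
  apply (derive_bound_lipschitz corrected
           (fun y => - cos (M * y) * cos (y / 2) / (4 * M * sin (y / 2) ^ 2)) lo hi);
    [| | exact Hx | exact PI_between].
  - intros y Hy. destruct (between_s_PI y Hy) as [_ [_ Hy2]].
    replace (- cos (M * y) * cos (y / 2) / (4 * M * sin (y / 2) ^ 2)) with
      (sin (M * y) / (2 * sin (y / 2))
       + (- sin (M * y) / (2 * sin (y / 2))
          - cos (M * y) * cos (y / 2) / (4 * M * sin (y / 2) ^ 2)))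
      by (field; lra).
    apply (is_derive_plus (sawtooth_err N) (fun y => cos (M * y) / (2 * M * sin (y / 2)))).
    + apply is_derive_sawtooth_err. lra.
    + apply is_derive_boundary_term; lra.
  - intros y Hy. destruct (between_s_PI y Hy) as [_ [_ Hy2]].
    apply Rabs_div_le_inv.
    + rewrite Rabs_mult, Rabs_Ropp.
      pose proof (Rabs_pos (cos (M * y))). pose proof (Rabs_pos (cos (y / 2))).
      pose proof (COS_bound (M * y)). pose proof (COS_bound (y / 2)).
      assert (Rabs (cos (M * y)) <= 1) by (apply Rabs_le; lra).
      assert (Rabs (cos (y / 2)) <= 1) by (apply Rabs_le; lra). nra.
    + split; [exact Hden|]. apply Rmult_le_compat_l; [lra|]. simpl. nra.
Qed.

Lemma sawtooth_err_bound (x : R) :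
  lo <= x <= hi -> Rabs (sawtooth_err N x) <= PI / (4 * M * sigma ^ 2) + / (2 * M * sigma).
Proof.
  intros Hx. destruct (between_s_PI x Hx) as [_ [Hsig Hx2]].
  replace (sawtooth_err N x) with
    (corrected x - cos (M * x) / (2 * M * sin (x / 2))) by (unfold corrected; ring).
  eapply Rle_trans; [apply Rabs_triang|]. rewrite Rabs_Ropp.
  apply Rplus_le_compat; [exact (corrected_sawtooth_bound x Hx)|].
  apply Rabs_div_le_inv.
  - pose proof (COS_bound (M * x)). apply Rabs_le; lra.
  - split; [nra|]. nra.
Qed.

Lemma parabola_err_bound :
  Rabs (parabola_err N s) <= PI * (PI / (4 * M * sigma ^ 2) + / (2 * M * sigma)).
Proof.
  pose proof PI_RGT_0. destruct (between_s_PI s s_between) as [HsPI [Hsig _]].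
  replace (parabola_err N s) with (parabola_err N s - parabola_err N PI)
    by (rewrite parabola_err_PI; ring).
  eapply Rle_trans.
  - apply (derive_bound_lipschitz (parabola_err N) (sawtooth_err N) lo hi);
      [intros; apply is_derive_parabola_err | exact sawtooth_err_bound
      | exact s_between | exact PI_between].
  - rewrite (Rmult_comm PI). apply Rmult_le_compat_l; [|exact HsPI].
    assert (0 < 4 * M * sigma ^ 2) by (apply Rmult_lt_0_compat; [lra | apply pow_lt; lra]).
    assert (0 < 2 * M * sigma) by nra.
    apply Rplus_le_le_0_compat; left; [apply Rdiv_lt_0_compat | apply Rinv_0_lt_compat]; lra.
Qed.

End DirichletBound.

Lemma parabola_series (s : R) :
  0 < s < 2 * PI ->
  infinite_sum (fun k => (cos (INR (S k) * PI) - cos (INR (S k) * s)) / INR (S k) ^ 2)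
    (- (s - PI) ^ 2 / 4).
Proof.
  intros Hs. pose proof PI_RGT_0.
  set (sigma := sin (s / 2)).
  assert (Hsig : 0 < sigma) by (apply sin_gt_0; lra).
  set (K := PI * (PI / (4 * sigma ^ 2) + / (2 * sigma))).
  assert (HK : 0 <= K).
  { assert (0 < sigma ^ 2) by (apply pow_lt; lra).
    apply Rmult_le_pos; [lra|].
    apply Rplus_le_le_0_compat; left; [apply Rdiv_lt_0_compat | apply Rinv_0_lt_compat]; lra. }
  apply (Un_cv_of_Rabs_le_inv _ _ K). intros N.
  pose proof (parabola_err_bound s N Hs) as Hb. unfold parabola_err in Hb. fold sigma in Hb.
  assert (HM : INR N + 1 <= INR (S N) + / 2) by (rewrite S_INR; lra).
  assert (HN : 0 < INR N + 1) by (pose proof (pos_INR N); lra).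
  replace (PI * (PI / (4 * (INR (S N) + / 2) * sigma ^ 2) + / (2 * (INR (S N) + / 2) * sigma)))
    with (K / (INR (S N) + / 2)) in Hb by (unfold K; field; lra).
  replace (sum_f_R0 _ N - - (s - PI) ^ 2 / 4) with
    (sum_f_R0 (fun k => (cos (INR (S k) * PI) - cos (INR (S k) * s)) / INR (S k) ^ 2) N
     + (s - PI) ^ 2 / 4) by field.
  eapply Rle_trans; [exact Hb|].
  unfold Rdiv. apply Rmult_le_compat_l; [exact HK|]. apply Rinv_le_contravar; lra.
Qed.

Definition cos_deficit (s : R) (k : nat) : R := (1 - cos (INR (S k) * s)) / INR (S k) ^ 2.

Lemma cos_deficit_nonneg (s : R) (k : nat) : 0 <= cos_deficit s k.
Proof.
  pose proof (COS_bound (INR (S k) * s)). pose proof (lt_0_INR (S k) (Nat.lt_0_succ k)).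
  apply Rdiv_le_0_compat; [lra | apply pow_lt; lra].
Qed.

Lemma cos_deficit_le_sq (s : R) (k : nat) : cos_deficit s k <= s ^ 2 / 2.
Proof.
  pose proof (one_minus_cos_le (INR (S k) * s)).
  pose proof (lt_0_INR (S k) (Nat.lt_0_succ k)).
  unfold cos_deficit. apply (Rmult_le_reg_r (INR (S k) ^ 2)); [apply pow_lt; lra|].
  unfold Rdiv. rewrite Rmult_assoc, Rinv_l by (apply pow_nonzero; lra). nra.
Qed.

Lemma cos_deficit_le_telescope (s : R) (k : nat) :
  cos_deficit s (S k) <= 2 / INR (S k) - 2 / INR (S (S k)).
Proof.
  pose proof (COS_bound (INR (S (S k)) * s)).
  pose proof (lt_0_INR (S k) (Nat.lt_0_succ k)).
  unfold cos_deficit. rewrite (S_INR (S k)) in *.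
  replace (2 / INR (S k) - 2 / (INR (S k) + 1)) with (2 / (INR (S k) * (INR (S k) + 1)))
    by (field; lra).
  apply Rle_trans with (2 / (INR (S k) + 1) ^ 2).
  - unfold Rdiv. apply Rmult_le_compat_r; [|lra].
    left. apply Rinv_0_lt_compat, pow_lt. lra.
  - unfold Rdiv. apply Rmult_le_compat_l; [lra|].
    apply Rinv_le_contravar; [nra | nra].
Qed.

(* The first [K+1] terms are small for small [s], the rest telescope. *)
Lemma cos_deficit_partial_le (s : R) (N K : nat) :
  sum_f_R0 (cos_deficit s) N <= INR (S K) * s ^ 2 / 2 + 2 / INR (S K).
Proof.
  assert (Hhead : forall n, sum_f_R0 (cos_deficit s) n <= INR (S n) * s ^ 2 / 2).
  { induction n as [|n IH]; cbn [sum_f_R0].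
    - pose proof (cos_deficit_le_sq s 0). simpl. lra.
    - pose proof (cos_deficit_le_sq s (S n)). rewrite (S_INR (S n)). lra. }
  assert (Htail : forall d, sum_f_R0 (cos_deficit s) (K + d)
                  <= sum_f_R0 (cos_deficit s) K + 2 / INR (S K) - 2 / INR (S (K + d))).
  { induction d as [|d IH]; [rewrite Nat.add_0_r; lra|].
    rewrite Nat.add_succ_r. cbn [sum_f_R0].
    pose proof (cos_deficit_le_telescope s (K + d)). lra. }
  assert (Hpos : forall n, 0 < 2 / INR (S n))
    by (intros n; apply Rdiv_lt_0_compat; [lra | apply lt_0_INR; lia]).
  pose proof (Hpos K). pose proof (pow2_ge_0 s).
  destruct (Nat.le_gt_cases N K) as [HNK|HNK].
  - pose proof (Hhead N). assert (INR (S N) <= INR (S K)) by (apply le_INR; lia). nra.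
  - replace N with (K + (N - K))%nat by lia.
    pose proof (Htail (N - K)%nat). pose proof (Hhead K). pose proof (Hpos (K + (N - K))%nat).
    lra.
Qed.

Lemma cos_deficit_series_shift (s C : R) :
  0 < s < 2 * PI -> infinite_sum (cos_deficit PI) C ->
  infinite_sum (cos_deficit s) (C - (s - PI) ^ 2 / 4).
Proof.
  intros Hs HC.
  pose proof (CV_plus _ _ _ _ HC (parabola_series s Hs)) as Hcv.
  intros eps Heps. destruct (Hcv eps Heps) as [N HN]. exists N. intros n Hn.
  replace (C - (s - PI) ^ 2 / 4) with (C + - (s - PI) ^ 2 / 4) by field.
  rewrite (sum_eq _ (fun k => cos_deficit PI k
             + (cos (INR (S k) * PI) - cos (INR (S k) * s)) / INR (S k) ^ 2)).
  - rewrite plus_sum. apply HN, Hn.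
  - intros k _. unfold cos_deficit. field. apply not_0_INR. lia.
Qed.

(* Comparing the two bounds on the limit at [s = 1/(K+1)] pins down its value at [PI]. *)
Lemma cos_deficit_PI_series : infinite_sum (cos_deficit PI) (PI ^ 2 / 4).
Proof.
  destruct (growing_cv (sum_f_R0 (cos_deficit PI))) as [C HC].
  - intros N. cbn [sum_f_R0]. pose proof (cos_deficit_nonneg PI (S N)). lra.
  - exists (INR 1 * PI ^ 2 / 2 + 2 / INR 1). intros x [N ->].
    apply cos_deficit_partial_le.
  - enough (HCv : C = PI ^ 2 / 4) by (rewrite <- HCv; exact HC).
    apply (eq_of_Rabs_le_inv _ _ 5). intros K.
    pose proof PI_RGT_0. pose proof PI_4.
    assert (HKpos : 0 < INR (S K)) by (apply lt_0_INR; lia).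
    assert (HK1 : 1 <= INR (S K)) by (apply (le_INR 1); lia).
    set (s := / INR (S K)).
    assert (Hs0 : 0 < s) by (apply Rinv_0_lt_compat; lra).
    assert (Hs1 : s <= 1) by (unfold s; rewrite <- Rinv_1; apply Rinv_le_contravar; lra).
    pose proof (cos_deficit_series_shift s C ltac:(pose proof PI2_3_2; lra) HC) as Hs.
    assert (Hlow : 0 <= C - (s - PI) ^ 2 / 4).
    { apply (Rle_cv_lim (Un := fun _ => 0) (Vn := sum_f_R0 (cos_deficit s))); [|apply Un_cv_const|exact Hs].
      intros N. apply cond_pos_sum, cos_deficit_nonneg. }
    assert (Hup : C - (s - PI) ^ 2 / 4 <= INR (S K) * s ^ 2 / 2 + 2 / INR (S K)).
    { apply (Rle_cv_lim (Un := sum_f_R0 (cos_deficit s)) (Vn := fun _ => INR (S K) * s ^ 2 / 2 + 2 / INR (S K)));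
        [|exact Hs|apply Un_cv_const].
      intros N. apply cos_deficit_partial_le. }
    replace (INR (S K) * s ^ 2 / 2 + 2 / INR (S K)) with (5 / 2 * s) in Hup
      by (unfold s; field; lra).
    replace (5 / INR (S K)) with (5 * s) by (unfold s; field; lra).
    apply Rabs_le. split; nra.
Qed.

Lemma cos_deficit_series (s : R) :
  0 <= s <= 2 * PI -> infinite_sum (cos_deficit s) (s * (2 * PI - s) / 4).
Proof.
  intros Hs. pose proof PI_RGT_0.
  destruct (Req_dec s 0) as [->|Hs0]; [|destruct (Req_dec s (2 * PI)) as [->|Hs2]].
  - apply (infinite_sum_ext (fun _ => 0)); [|replace (0 * _ / 4) with 0 by field; apply infinite_sum_zero].
    intros k. unfold cos_deficit. rewrite Rmult_0_r, cos_0. field. apply not_0_INR. lia.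
  - apply (infinite_sum_ext (fun _ => 0)); [|replace (_ * (2 * PI - 2 * PI) / 4) with 0 by field; apply infinite_sum_zero].
    intros k. unfold cos_deficit.
    replace (INR (S k) * (2 * PI)) with (0 + 2 * INR (S k) * PI) by ring.
    rewrite cos_period, cos_0.
    field. apply not_0_INR. lia.
  - replace (s * (2 * PI - s) / 4) with (PI ^ 2 / 4 - (s - PI) ^ 2 / 4) by field.
    apply cos_deficit_series_shift; [lra | exact cos_deficit_PI_series].
Qed.

Lemma sinc_opp (x : R) : sinc (- x) = sinc x.
Proof.
  unfold sinc. destruct (Req_EM_T (- x) 0), (Req_EM_T x 0); try reflexivity; try lra.
  rewrite Ropp_mult_distr_r_reverse, sin_neg. pose proof PI_neq0. field. auto.
Qed.

Lemma sinc_sq (x : R) : x <> 0 -> sinc x ^ 2 = (1 - cos (2 * PI * x)) / (2 * (PI * x) ^ 2).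
Proof.
  intros Hx. unfold sinc. destruct (Req_EM_T x 0) as [|_]; [contradiction|].
  replace (2 * PI * x) with (2 * (PI * x)) by ring. rewrite cos_2a_sin.
  pose proof PI_neq0. field. auto.
Qed.

Lemma interf_term_eq (zeta P theta a : R) (k : Z) (n : nat) :
  zeta * P <> 0 -> theta <> 0 -> / theta = IZR k + a ->
  interf_term zeta P theta n = zeta * P * theta ^ 2 / PI ^ 2 * cos_deficit (2 * PI * a) n.
Proof.
  intros HzP Ht Hk. pose proof PI_neq0.
  unfold interf_term, gch, cos_deficit. rewrite !pow2_abs, opp_IZR, <- INR_IZR_INZ.
  assert (Hm : INR (S n) <> 0) by (apply not_0_INR; lia).
  assert (Hx : INR (S n) / theta <> 0) by (unfold Rdiv; apply Rmult_integral_contrapositive; split;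
    [exact Hm | apply Rinv_neq_0_compat, Ht]).
  rewrite Rdiv_opp_l, sinc_opp.
  assert (Hcos : cos (2 * PI * (INR (S n) / theta)) = cos (INR (S n) * (2 * PI * a))).
  { rewrite <- (cos_period_Z (INR (S n) * (2 * PI * a)) (Z.of_nat (S n) * k)), mult_IZR, <- INR_IZR_INZ.
    f_equal. unfold Rdiv. rewrite Hk. ring. }
  replace ((zeta * P * sinc (INR (S n) / theta)) ^ 2 + (zeta * P * sinc (INR (S n) / theta)) ^ 2)
    with (2 * (zeta * P) ^ 2 * sinc (INR (S n) / theta) ^ 2) by ring.
  rewrite sinc_sq, Hcos by exact Hx. destruct (Rmult_neq_0_reg _ _ HzP). field. auto.
Qed.

Lemma interf_series (zeta P theta a : R) (k : Z) :
  zeta * P <> 0 -> theta <> 0 -> / theta = IZR k + a -> 0 <= a <= 1 ->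
  infinite_sum (interf_term zeta P theta) (zeta * P * theta ^ 2 * a * (1 - a)).
Proof.
  intros HzP Ht Hk Ha. pose proof PI_RGT_0.
  apply (infinite_sum_ext (fun n => zeta * P * theta ^ 2 / PI ^ 2 * cos_deficit (2 * PI * a) n)).
  { intros n. symmetry. exact (interf_term_eq zeta P theta a k n HzP Ht Hk). }
  replace (zeta * P * theta ^ 2 * a * (1 - a))
    with (zeta * P * theta ^ 2 / PI ^ 2 * (2 * PI * a * (2 * PI - 2 * PI * a) / 4))
    by (field; lra).
  apply infinite_sum_scal, cos_deficit_series. nra.
Qed.

Theorem mainTheorem4 (theta zeta P N0 : R)
  (Htheta : 0 < theta) (Hzeta : 0 < zeta) (HP : 0 < P) :
  let beta := floorR (/ theta) in
  let alpha := / theta - beta in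
  exists I : R,
    infinite_sum (interf_term zeta P theta) I /\
    I = zeta * P * (theta ^ 2 * (beta ^ 2 + 2 * alpha * beta + alpha) - 1) /\
    ln (1 + zeta * P / (N0 + I)) =
      ln (1 + zeta * P /
            (N0 + zeta * P * (theta ^ 2 * (beta ^ 2 + 2 * alpha * beta + alpha) - 1))) /\
    ((exists k : Z, / theta = IZR k) -> I = 0).
Proof.
  intros beta alpha.
  assert (Halpha : 0 <= alpha <= 1)
    by (destruct (base_Int_part (/ theta)); unfold alpha, beta, floorR; lra).
  assert (HI : zeta * P * theta ^ 2 * alpha * (1 - alpha)
               = zeta * P * (theta ^ 2 * (beta ^ 2 + 2 * alpha * beta + alpha) - 1))
    by (unfold alpha; field; lra).
  exists (zeta * P * (theta ^ 2 * (beta ^ 2 + 2 * alpha * beta + alpha) - 1)).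
  split; [|split; [reflexivity | split; [reflexivity|]]].
  - rewrite <- HI. apply (interf_series _ _ _ _ (Int_part (/ theta))); try nra.
    unfold alpha, beta, floorR. ring.
  - intros [k Hk]. rewrite <- HI.
    assert (Hbeta : beta = IZR k)
      by (unfold beta, floorR; rewrite Hk, <- (Int_part_spec (IZR k) k) by lra; reflexivity).
    unfold alpha. rewrite Hbeta, Hk. ring.
Qed.
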